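(* For all integers $m \geq 3$ and $k$ with $2 \leq k \leq m-1$, $$\mathbb{P}_{X \sim B(m,\frac{k}{m})}\big[X \leq k\big] \leq 0.7152.$$
   Context: $B(m,p)$ denotes the binomial distribution with $m$ trials and success probability $p$: $\mathbb{P}[X=j]=\binom{m}{j}p^j(1-p)^{m-j}$ for $j=0,\dots,m$. *)

From HB Require Import structures.
From mathcomp Require Import all_boot all_order all_algebra.
Set Implicit Arguments. Unset Strict Implicit. Unset Printing Implicit Defensive.
Import Order.TTheory GRing.Theory Num.Theory.
Local Open Scope ring_scope.

Definition binom_pmf (m : nat) (p : rat) (j : nat) : rat :=
  ('C(m, j))%:R * p ^+ j * (1 - p) ^+ (m - j).

Definition binom_cdf (m : nat) (p : rat) (k : nat) : rat :=
  \sum_(0 <= j < k.+1) binom_pmf m p j.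

From HB Require Import structures.
From mathcomp Require Import all_boot all_order all_algebra.
From mathcomp Require Import ring lra zify.
From mathcomp.real_closed Require Import polyrcf realalg.
Set Implicit Arguments. Unset Strict Implicit. Unset Printing Implicit Defensive.
Import Order.TTheory GRing.Theory Num.Theory.
Local Open Scope ring_scope.

(* Let F(m) = P[X <= k] for X ~ B(m, k/m), with k >= 2 fixed.  The proof has
   three steps.
   1. F is nonincreasing in m on m > k.  Write C_n(p) = P[B(n, p) <= k] as a
      polynomial in p.  Its derivative telescopes: C_{n+1}' = -(n+1) b_{n,k},
      where b_{n,k}(p) = P[B(n, p) = k].  By the mean value theorem,
      C_{m+1}(k/(m+1)) = C_{m+1}(k/m) + (k/m) b_{m,k}(c) for some c, and
      b_{m,k}(c) <= b_{m,k}(k/m) because t^k (1-t)^(m-k) peaks at t = k/m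
      (two-term AM-GM).  Pascal's rule C_{m+1}(p) = C_m(p) - p b_{m,k}(p)
      then gives F(m+1) <= F(m).
   2. Hence F(m) <= F(k+1) = 1 - (k/(k+1))^(k+1).
   3. (k/(k+1))^(k+1) is nondecreasing in k (AM-GM again), hence >= 8/27,
      so F(m) <= 19/27 < 0.7152.
   The mean value theorem for polynomials is available over any real closed
   field; the rational statement is transported to the real algebraic
   numbers [realalg] through the embedding [ratr]. *)

Section AMGM.
Variable R : realFieldType.

Lemma amgm2 (a b : R) (k M : nat) : 0 <= a -> 0 <= b ->
  a ^+ k * b ^+ M <= ((k%:R * a + M%:R * b) / (k + M)%:R) ^+ (k + M).
Proof.
move=> a0 b0.
pose E := fun i : 'I_(k + M) => if (i < k)%N then a else b.
have EaL (i : 'I_k) : E (lshift M i) = a by rewrite /E /= ltn_ord.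
have EbR (i : 'I_M) : E (rshift k i) = b by rewrite /E /= ltnNge leq_addr.
have := @leif_AGM R _ predT E; rewrite cardT size_enum_ord /=.
rewrite !big_split_ord /= (eq_bigr _ (fun i _ => EaL i)) (eq_bigr _ (fun i _ => EbR i)).
rewrite (eq_bigr _ (fun i _ => EaL i)) (eq_bigr _ (fun i _ => EbR i)).
rewrite !sumr_const !prodr_const !card_ord !mulr_natl.
by move=> H; apply: leif_le (H _) => i _; rewrite /E; case: ifP.
Qed.

Lemma bernstein_peak (k M : nat) (t : R) : (0 < k)%N -> (0 < M)%N ->
  0 <= t -> t <= 1 ->
  t ^+ k * (1 - t) ^+ M <= (k%:R / (k + M)%:R) ^+ k * (M%:R / (k + M)%:R) ^+ M.
Proof.
move=> k0 M0 t0 t1.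
have kn : (k%:R : R) != 0 by rewrite pnatr_eq0 -lt0n.
have Mn : (M%:R : R) != 0 by rewrite pnatr_eq0 -lt0n.
have kMn : ((k + M)%:R : R) != 0 by rewrite pnatr_eq0 addn_eq0 negb_and -!lt0n k0.
have := @amgm2 (t / k%:R) ((1 - t) / M%:R) k M (divr_ge0 t0 (ler0n _ _))
  (divr_ge0 (ltac:(by rewrite subr_ge0) : 0 <= 1 - t) (ler0n _ _)).
have -> : k%:R * (t / k%:R) + M%:R * ((1 - t) / M%:R) = 1 :> R.
  by field; rewrite kn Mn.
have wpos : (0 : R) <= k%:R ^+ k * M%:R ^+ M by rewrite mulr_ge0 // exprn_ge0.
move=> /(ler_wpM2r wpos); rewrite !expr_div_n expr1n exprD.
have -> : t ^+ k / k%:R ^+ k * ((1 - t) ^+ M / M%:R ^+ M) * (k%:R ^+ k * M%:R ^+ M)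
   = t ^+ k * (1 - t) ^+ M by field; rewrite !expf_neq0.
by move/le_trans; apply; rewrite le_eqVlt; apply/predU1P; left; field;
  rewrite !expf_neq0.
Qed.

Lemma ratio_pow_step (k : nat) :
  (k%:R / k.+1%:R) ^+ k.+1 <= (k.+1%:R / k.+2%:R) ^+ k.+2 :> R.
Proof.
have k1 : (k.+1%:R : R) != 0 by rewrite pnatr_eq0.
have := @amgm2 (k%:R / k.+1%:R) 1 k.+1 1 (divr_ge0 (ler0n _ _) (ler0n _ _)) ler01.
rewrite expr1 mulr1 addn1.
suff -> : k.+1%:R * (k%:R / k.+1%:R) + 1%:R * 1 = k.+1%:R :> R by [].
by rewrite mulrCA mulfV // !mulr1 natr1.
Qed.

(* Its value at k = 2 is 8/27. *)
Lemma ratio_pow_ge (k : nat) : (2 <= k)%N ->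
  8%:R / 27%:R <= (k%:R / k.+1%:R) ^+ k.+1 :> R.
Proof.
elim: k => [|k IH] //; rewrite leq_eqVlt => /orP [/eqP <-|k1].
  by rewrite le_eqVlt; apply/predU1P; left; field.
exact: le_trans (IH k1) (ratio_pow_step k).
Qed.

End AMGM.

Section BinomialPolynomials.
Variable R : comNzRingType.

Definition bpmf (n : nat) (p : R) (j : nat) : R :=
  ('C(n, j))%:R * p ^+ j * (1 - p) ^+ (n - j).
Definition bcdf (n : nat) (p : R) (k : nat) : R :=
  \sum_(0 <= j < k.+1) bpmf n p j.

Lemma bpmfS n (p : R) k : (k < n)%N ->
  bpmf n.+1 p k.+1 = (1 - p) * bpmf n p k.+1 + p * bpmf n p k.
Proof.
move=> kn; rewrite /bpmf binS natrD subSS -(subnSK kn) !exprS; ring.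
Qed.

(* Adding a trial lowers P[X <= k] by P[X_n = k and last trial succeeds]. *)
Lemma bcdfS n (p : R) k : (k <= n)%N -> bcdf n.+1 p k = bcdf n p k - p * bpmf n p k.
Proof.
elim: k => [|k IH] kn.
  rewrite /bcdf !big_nat1 /bpmf !bin0 !subn0 exprS; ring.
rewrite /bcdf big_nat_recr //= -/(bcdf n.+1 p k) IH ?(ltnW kn) // bpmfS //.
rewrite [\sum_(0 <= j < k.+2) _]big_nat_recr //= -/(bcdf n p k); ring.
Qed.

Lemma bcdf_total n (p : R) : bcdf n p n = 1.
Proof.
have := exprDn (1 - p) p n; rewrite subrK expr1n => ->.
rewrite /bcdf big_mkord; apply: eq_bigr => i _.
by rewrite /bpmf -mulrA mulr_natl mulrC.
Qed.

Lemma bcdf_last k (p : R) : bcdf k.+1 p k = 1 - p ^+ k.+1.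
Proof.
rewrite -(bcdf_total k.+1 p) [bcdf k.+1 p k.+1]/bcdf big_nat_recr //= -/(bcdf k.+1 p k).
by rewrite /bpmf subnn binn expr0 mulr1 mul1r addrK.
Qed.

Definition bpoly (n j : nat) : {poly R} := ('C(n, j))%:R *: ('X^j * (1 - 'X) ^+ (n - j)).
Definition bcpoly (n k : nat) : {poly R} := \sum_(0 <= j < k.+1) bpoly n j.

Lemma horner_bpoly n j x : (bpoly n j).[x] = bpmf n x j.
Proof.
by rewrite /bpoly /bpmf hornerZ hornerM hornerXn horner_exp hornerD hornerN hornerX
  hornerC mulrA.
Qed.

Lemma horner_bcpoly n k x : (bcpoly n k).[x] = bcdf n x k.
Proof. by rewrite /bcpoly horner_sum; apply: eq_bigr => j _; rewrite horner_bpoly. Qed.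

Lemma deriv_bpoly0 n : (bpoly n.+1 0)^`() = - (n.+1%:R *: bpoly n 0).
Proof.
rewrite /bpoly !bin0 !scale1r !expr0 !mul1r !subn0 deriv_exp derivB derivX.
by rewrite -polyC1 derivC sub0r mulN1r scaler_nat mulNrn.
Qed.

Lemma deriv_bpolyS n k : (k < n)%N ->
  (bpoly n.+1 k.+1)^`() = n.+1%:R *: (bpoly n k - bpoly n k.+1).
Proof.
move=> kn; rewrite /bpoly subSS -(subnSK kn).
set e := (n - k.+1)%N.
rewrite derivZ derivM derivXn deriv_exp derivB derivX -polyC1 derivC sub0r /=.
rewrite !polyC1 mulrnAl mulN1r mulrnAr mulrN mulNrn.
rewrite !scaler_nat mulrnBl mulrnBl -!mulrnA.
have -> : (k.+1 * 'C(n.+1, k.+1) = 'C(n, k) * n.+1)%N by rewrite -mul_bin_diag mulnC.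
have -> : (e.+1 * 'C(n.+1, k.+1) = 'C(n, k.+1) * n.+1)%N.
  by rewrite mulnC /e subnSK // mulnC -subSS -(mul_bin_down n.+1) mulnC.
by [].
Qed.

(* The derivative of the cdf telescopes to a single pmf term. *)
Lemma deriv_bcpoly n k : (k <= n)%N -> (bcpoly n.+1 k)^`() = - (n.+1%:R *: bpoly n k).
Proof.
elim: k => [|k IH] kn; first by rewrite /bcpoly big_nat1 deriv_bpoly0.
rewrite /bcpoly big_nat_recr //= derivD -/(bcpoly n.+1 k) IH ?(ltnW kn) //.
by rewrite deriv_bpolyS // scalerBr addrA addNr sub0r.
Qed.

End BinomialPolynomials.

Lemma bpmf_peak (R : realFieldType) (m k : nat) (t : R) : (0 < k)%N -> (k < m)%N ->
  0 <= t -> t <= 1 -> bpmf m t k <= bpmf m (k%:R / m%:R) k.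
Proof.
move=> k0 km t0 t1; rewrite /bpmf -!mulrA ler_wpM2l ?ler0n //.
have mn : (m%:R : R) != 0 by rewrite pnatr_eq0; lia.
have := @bernstein_peak R k (m - k) t k0 (ltac:(by rewrite subn_gt0)) t0 t1.
rewrite subnKC ?(ltnW km) //.
suff -> : (m - k)%:R / m%:R = 1 - k%:R / m%:R :> R by [].
by rewrite natrB ?(ltnW km) //; field.
Qed.

Section Monotonicity.
Variable R : rcfType.

Lemma bcdf_mvt n k (a b : R) : (k <= n)%N -> a < b ->
  exists2 c, a < c < b &
    bcdf n.+1 a k = bcdf n.+1 b k + n.+1%:R * bpmf n c k * (b - a).
Proof.
move=> kn ab; have [c ci Hc] := poly_mvt (bcpoly R n.+1 k) ab.
exists c; first by move: ci; rewrite in_itv.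
move: Hc; rewrite deriv_bcpoly // hornerN hornerZ horner_bpoly !horner_bcpoly => Hc.
by rewrite -[bcdf _ a k](subrK (bcdf n.+1 b k)) -opprB Hc; ring.
Qed.

Lemma bcdf_step k m : (0 < k)%N -> (k < m)%N ->
  bcdf m.+1 (k%:R / m.+1%:R : R) k <= bcdf m (k%:R / m%:R) k.
Proof.
move=> k0 km.
have mn : (m%:R : R) != 0 by rewrite pnatr_eq0; lia.
have m1n : (1 + m%:R : R) != 0 by rewrite addrC natr1 pnatr_eq0.
set q0 : R := k%:R / m%:R; set q1 : R := k%:R / m.+1%:R.
have dq : q0 - q1 = q0 / m.+1%:R by rewrite /q0 /q1; field; rewrite m1n mn.
have q0_gt0 : 0 < q0 by rewrite /q0 divr_gt0 ?ltr0n //; lia.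
have q10 : q1 < q0 by rewrite -subr_gt0 dq divr_gt0 ?ltr0n.
have q0_le1 : q0 <= 1.
  by rewrite /q0 ler_pdivrMr ?mul1r ?ler_nat ?ltr0n; lia.
have q1_ge0 : 0 <= q1 by rewrite /q1 divr_ge0 ?ler0n.
have [c /andP[c1 c2] ->] := bcdf_mvt (ltnW km) q10.
have peak : bpmf m c k <= bpmf m q0 k.
  by apply: bpmf_peak => //; [exact: ltW (le_lt_trans q1_ge0 c1)|
    exact: ltW (lt_le_trans c2 q0_le1)].
have -> : m.+1%:R * bpmf m c k * (q0 - q1) = q0 * bpmf m c k.
  by rewrite dq; field; rewrite m1n.
rewrite bcdfS ?(ltnW km) //.
have := ler_wpM2l (ltW q0_gt0) peak; lra.
Qed.

Lemma bcdf_chain k n : (0 < k)%N ->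
  bcdf (k.+1 + n) (k%:R / (k.+1 + n)%:R : R) k <= bcdf k.+1 (k%:R / k.+1%:R) k.
Proof.
move=> k0; elim: n => [|n IH]; first by rewrite addn0.
by apply: le_trans IH; rewrite addnS; apply: bcdf_step; rewrite // addSn ltnS leq_addr.
Qed.

End Monotonicity.

Lemma bcdf_top_bound (R : realFieldType) k : (2 <= k)%N ->
  bcdf k.+1 (k%:R / k.+1%:R : R) k <= 19%:R / 27%:R.
Proof.
move=> k2; rewrite bcdf_last.
have := ratio_pow_ge R k2.
suff <- : 1 - 8%:R / 27%:R = 19%:R / 27%:R :> R by rewrite lerD2l lerN2.
by field.
Qed.

Lemma ratr_binom_cdf (R : numFieldType) m (p : rat) k :
  ratr (binom_cdf m p k) = bcdf m (ratr p : R) k.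
Proof.
rewrite /binom_cdf /bcdf rmorph_sum; apply: eq_bigr => j _.
by rewrite /binom_pmf /bpmf !rmorphM !rmorphXn rmorphB rmorph1 rmorph_nat.
Qed.

Theorem corollary2 (m k : nat) (hm : (3 <= m)%N) (hk2 : (2 <= k)%N)
    (hkm : (k <= m - 1)%N) :
  binom_cdf m (k%:R / m%:R) k <= 7152%:R / 10000%:R.
Proof.
have bound : (19%:R / 27%:R : rat) <= 7152%:R / 10000%:R by vm_compute.
apply: le_trans bound.
rewrite -(@ler_rat realalg) ratr_binom_cdf !fmorph_div !rmorph_nat.
have -> : m = (k.+1 + (m - k.+1))%N by lia.
apply: le_trans (bcdf_chain _ _ (ltnW hk2)) _.
exact: bcdf_top_bound.
Qed.
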